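(* Let $X$ be a real $\omega$-LUR Banach space in which there is a big point $u\in S_X$. Then $X$ is convex-transitive.
   Context: $X$ is $\omega$-LUR if for every $x\in S_X$ and every $(x_n)\subset B_X$ with $\|x+x_n\|\to 2$ one has $x_n\to x$ weakly. $\mathcal{G}_X$ is the group of surjective linear isometries of $X$; $x\in S_X$ is a big point if $\overline{\mathrm{conv}}(\{T(x):T\in\mathcal{G}_X\})=B_X$; $X$ is convex-transitive if every $x\in S_X$ is a big point. *)

From Stdlib Require Import Reals Lra List.
Open Scope R_scope.

Record NormedSpace := {
  car :> Type;
  vzero : car;
  vadd : car -> car -> car;
  vopp : car -> car;
  vscal : R -> car -> car;
  vnorm : car -> R;
  vadd_assoc : forall x y z, vadd x (vadd y z) = vadd (vadd x y) z;
  vadd_comm : forall x y, vadd x y = vadd y x;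
  vadd_0 : forall x, vadd x vzero = x;
  vadd_opp : forall x, vadd x (vopp x) = vzero;
  vscal_1 : forall x, vscal 1 x = x;
  vscal_assoc : forall a b x, vscal a (vscal b x) = vscal (a * b) x;
  vscal_distr_v : forall a x y, vscal a (vadd x y) = vadd (vscal a x) (vscal a y);
  vscal_distr_s : forall a b x, vscal (a + b) x = vadd (vscal a x) (vscal b x);
  vnorm_eq0 : forall x, vnorm x = 0 -> x = vzero;
  vnorm_scal : forall a x, vnorm (vscal a x) = Rabs a * vnorm x;
  vnorm_triangle : forall x y, vnorm (vadd x y) <= vnorm x + vnorm y
}.

Arguments vzero {n}.
Arguments vadd {n}.
Arguments vopp {n}.
Arguments vscal {n}.
Arguments vnorm {n}.

Definition vsub {X : NormedSpace} (x y : X) : X := vadd x (vopp y).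

Definition complete (X : NormedSpace) : Prop :=
  forall u : nat -> X,
    (forall eps, eps > 0 -> exists N, forall n m, (n >= N)%nat -> (m >= N)%nat ->
        vnorm (vsub (u n) (u m)) < eps) ->
    exists l : X, forall eps, eps > 0 -> exists N, forall n, (n >= N)%nat ->
        vnorm (vsub (u n) l) < eps.

Definition S_X {X : NormedSpace} (x : X) : Prop := vnorm x = 1.
Definition B_X {X : NormedSpace} (x : X) : Prop := vnorm x <= 1.

Definition is_linear {X Y : NormedSpace} (T : X -> Y) : Prop :=
  (forall x y, T (vadd x y) = vadd (T x) (T y)) /\
  (forall a x, T (vscal a x) = vscal a (T x)).

Definition is_dual_elt {X : NormedSpace} (f : X -> R) : Prop :=
  (forall x y, f (vadd x y) = f x + f y) /\
  (forall a x, f (vscal a x) = a * f x) /\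
  (exists M, forall x, Rabs (f x) <= M * vnorm x).

Definition weak_cv {X : NormedSpace} (u : nat -> X) (x : X) : Prop :=
  forall f : X -> R, is_dual_elt f -> Un_cv (fun n => f (u n)) (f x).

Definition omega_LUR (X : NormedSpace) : Prop :=
  forall (x : X) (u : nat -> X),
    S_X x -> (forall n, B_X (u n)) ->
    Un_cv (fun n => vnorm (vadd x (u n))) 2 ->
    weak_cv u x.

Definition in_GX {X : NormedSpace} (T : X -> X) : Prop :=
  is_linear T /\ (forall x, vnorm (T x) = vnorm x) /\
  (forall y, exists x, T x = y).

Fixpoint comb {X : NormedSpace} (l : list (R * X)) : X :=
  match l with
  | nil => vzero
  | (a, x) :: l' => vadd (vscal a x) (comb l')
  end.

Fixpoint coef_sum {X : NormedSpace} (l : list (R * X)) : R :=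
  match l with
  | nil => 0
  | (a, _) :: l' => a + coef_sum l'
  end.

Definition conv {X : NormedSpace} (A : X -> Prop) (z : X) : Prop :=
  exists l : list (R * X),
    Forall (fun p => 0 <= fst p /\ A (snd p)) l /\
    coef_sum l = 1 /\ z = comb l.

Definition closure {X : NormedSpace} (A : X -> Prop) (z : X) : Prop :=
  forall eps, eps > 0 -> exists y, A y /\ vnorm (vsub z y) < eps.

Definition closed_conv {X : NormedSpace} (A : X -> Prop) : X -> Prop :=
  closure (conv A).

Definition orbit {X : NormedSpace} (x : X) (y : X) : Prop :=
  exists T : X -> X, in_GX T /\ y = T x.

Definition big_point {X : NormedSpace} (x : X) : Prop :=
  S_X x /\ forall z, closed_conv (orbit x) z <-> B_X z.

Definition convex_transitive (X : NormedSpace) : Prop :=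
  forall x : X, S_X x -> big_point x.

(** Let [u] be a big point of an omega-LUR space [X] and [x] a point of the
    unit sphere.  Since the closed convex hull of the orbit of [u] is the unit
    ball, which contains [x], we get [sup_T ||x + T u|| = 2] over [T] in [G_X];
    choosing [T_n] with [||x + T_n u|| -> 2] gives [||u + T_n^-1 x|| -> 2], so
    omega-LUR yields [T_n^-1 x -> u] weakly.  By Mazur's theorem (a separation
    argument) [u] lies in the norm-closed convex hull of the orbit of [x]; as
    that hull is [G_X]-invariant and convex, it contains the closed convex hull
    of the orbit of [u], i.e. the whole unit ball.  So [x] is a big point. *)
From Stdlib Require Import Reals Lra List Classical ClassicalEpsilon.
From mathcomp Require boolp classical_sets.
Open Scope R_scope.

Arguments vadd_assoc {n}. Arguments vadd_comm {n}. Arguments vadd_0 {n}.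
Arguments vadd_opp {n}. Arguments vscal_1 {n}. Arguments vscal_assoc {n}.
Arguments vscal_distr_v {n}. Arguments vscal_distr_s {n}.
Arguments vnorm_eq0 {n}. Arguments vnorm_scal {n}. Arguments vnorm_triangle {n}.

Section VectorAlgebra.
Context {X : NormedSpace}.

Lemma vadd_0l (x : X) : vadd vzero x = x.
Proof. rewrite vadd_comm; apply vadd_0. Qed.

Lemma vadd_cancel_l (x y z : X) : vadd x y = vadd x z -> y = z.
Proof.
  intro H. rewrite <- (vadd_0l y), <- (vadd_0l z).
  rewrite <- (vadd_opp x), (vadd_comm x (vopp x)), <- !vadd_assoc, H. reflexivity.
Qed.

Lemma vscal_0 (x : X) : vscal 0 x = vzero.
Proof.
  apply (vadd_cancel_l (vscal 0 x)). rewrite vadd_0, <- vscal_distr_s.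
  f_equal; ring.
Qed.

Lemma vscal_zero (a : R) : vscal a (@vzero X) = vzero.
Proof. rewrite <- (vscal_0 vzero), vscal_assoc, Rmult_0_r. reflexivity. Qed.

Lemma vopp_scal (x : X) : vopp x = vscal (-1) x.
Proof.
  apply (vadd_cancel_l x). rewrite vadd_opp.
  rewrite <- (vscal_1 x) at 1. rewrite <- vscal_distr_s.
  replace (1 + -1) with 0 by ring. rewrite vscal_0; reflexivity.
Qed.

(** From here on, differences are written [vadd x (vscal (-1) y)]. *)
Lemma vsub_scal (x y : X) : vsub x y = vadd x (vscal (-1) y).
Proof. unfold vsub; rewrite vopp_scal; reflexivity. Qed.

Lemma vsub_self (x : X) : vadd x (vscal (-1) x) = vzero.
Proof. rewrite <- vopp_scal; apply vadd_opp. Qed.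

Lemma vadd_shuffle (a b c d : X) :
  vadd (vadd a b) (vadd c d) = vadd (vadd a c) (vadd b d).
Proof.
  rewrite <- !vadd_assoc. f_equal. rewrite !vadd_assoc. f_equal. apply vadd_comm.
Qed.

Lemma vsub_vadd (a b c d : X) :
  vadd (vadd a b) (vscal (-1) (vadd c d))
  = vadd (vadd a (vscal (-1) c)) (vadd b (vscal (-1) d)).
Proof. rewrite vscal_distr_v; apply vadd_shuffle. Qed.

Lemma vsub_vscal (t : R) (x y : X) :
  vadd (vscal t x) (vscal (-1) (vscal t y)) = vscal t (vadd x (vscal (-1) y)).
Proof. rewrite vscal_distr_v, !vscal_assoc, Rmult_comm. reflexivity. Qed.

Lemma vnorm_zero : vnorm (@vzero X) = 0.
Proof. rewrite <- (vscal_0 vzero), vnorm_scal, Rabs_R0; ring. Qed.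

Lemma vnorm_opp1 (x : X) : vnorm (vscal (-1) x) = vnorm x.
Proof. rewrite vnorm_scal, (Rabs_left (-1)) by lra; ring. Qed.

Lemma vnorm_nonneg (x : X) : 0 <= vnorm x.
Proof.
  pose proof (vnorm_triangle x (vscal (-1) x)) as H.
  rewrite vnorm_opp1, vsub_self, vnorm_zero in H. lra.
Qed.

Lemma vnorm_rev (x y : X) : vnorm x - vnorm y <= vnorm (vadd x (vscal (-1) y)).
Proof.
  pose proof (vnorm_triangle (vadd x (vscal (-1) y)) y) as H.
  rewrite <- vadd_assoc, (vadd_comm (vscal (-1) y) y), vsub_self, vadd_0 in H. lra.
Qed.

Lemma vdist_tri (x y z : X) :
  vnorm (vadd x (vscal (-1) z))
  <= vnorm (vadd x (vscal (-1) y)) + vnorm (vadd y (vscal (-1) z)).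
Proof.
  etransitivity; [|apply vnorm_triangle]. right. f_equal.
  rewrite <- vadd_assoc. f_equal.
  rewrite vadd_assoc, (vadd_comm _ y), vsub_self, vadd_0l. reflexivity.
Qed.

End VectorAlgebra.

Section ConvexCombinations.
Context {X : NormedSpace}.

Definition weighted (A : X -> Prop) (l : list (R * X)) : Prop :=
  Forall (fun p => 0 <= fst p /\ A (snd p)) l.

Definition wcomb (A : X -> Prop) (lam : R) (w : X) : Prop :=
  exists l, weighted A l /\ coef_sum l = lam /\ w = comb l.

Lemma conv_wcomb (A : X -> Prop) (z : X) : conv A z <-> wcomb A 1 z.
Proof. reflexivity. Qed.

Lemma wcomb_zero (A : X -> Prop) : wcomb A 0 vzero.
Proof. exists nil. split; [constructor|split; reflexivity]. Qed.

Lemma wcomb_single (A : X -> Prop) (a : R) (y : X) :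
  0 <= a -> A y -> wcomb A a (vscal a y).
Proof.
  intros Ha Hy. exists ((a, y) :: nil). split; [|split]; simpl.
  - constructor; [split; auto|constructor].
  - ring.
  - rewrite vadd_0; reflexivity.
Qed.

Lemma coef_sum_app (l1 l2 : list (R * X)) :
  coef_sum (l1 ++ l2) = coef_sum l1 + coef_sum l2.
Proof. induction l1 as [|[a y] l IH]; simpl; [ring|]. rewrite IH; ring. Qed.

Lemma comb_app (l1 l2 : list (R * X)) : comb (l1 ++ l2) = vadd (comb l1) (comb l2).
Proof.
  induction l1 as [|[a y] l IH]; simpl; [rewrite vadd_0l; auto|].
  rewrite IH, vadd_assoc; reflexivity.
Qed.

Lemma wcomb_add (A : X -> Prop) (l1 l2 : R) (w1 w2 : X) :
  wcomb A l1 w1 -> wcomb A l2 w2 -> wcomb A (l1 + l2) (vadd w1 w2).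
Proof.
  intros [m1 [A1 [<- ->]]] [m2 [A2 [<- ->]]]. exists (m1 ++ m2). split; [|split].
  - apply Forall_app; auto.
  - apply coef_sum_app.
  - symmetry; apply comb_app.
Qed.

Lemma wcomb_scal (A : X -> Prop) (t lam : R) (w : X) :
  0 <= t -> wcomb A lam w -> wcomb A (t * lam) (vscal t w).
Proof.
  intros Ht [m [Am [<- ->]]]. exists (map (fun p => (t * fst p, snd p)) m).
  induction Am as [|[a y] m [Ha Hy] Am IH]; simpl in *.
  - rewrite vscal_zero. repeat split; [constructor|ring].
  - destruct IH as [IH1 [IH2 IH3]]. split; [|split].
    + constructor; auto. simpl; split; auto. apply Rmult_le_pos; auto.
    + rewrite IH2; ring.
    + rewrite <- IH3, vscal_distr_v, vscal_assoc; reflexivity.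
Qed.

Lemma wcomb_nonneg (A : X -> Prop) (lam : R) (w : X) : wcomb A lam w -> 0 <= lam.
Proof.
  intros [m [Am [<- _]]].
  induction Am as [|[a y] m [Ha _] _ IH]; simpl in *; lra.
Qed.

Lemma wcomb_norm (A : X -> Prop) (M lam : R) (w : X) :
  (forall y, A y -> vnorm y <= M) -> wcomb A lam w -> vnorm w <= lam * M.
Proof.
  intros HA [m [Am [<- ->]]].
  induction Am as [|[a y] m [Ha Hy] _ IH]; simpl in *.
  - rewrite vnorm_zero; lra.
  - eapply Rle_trans; [apply vnorm_triangle|].
    rewrite vnorm_scal, Rabs_pos_eq by auto.
    pose proof (Rmult_le_compat_l a _ _ Ha (HA y Hy)). lra.
Qed.

Lemma wcomb_conv (A : X -> Prop) (lam : R) (w : X) :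
  wcomb (conv A) lam w -> wcomb A lam w.
Proof.
  intros [m [Am [<- ->]]].
  induction Am as [|[a y] m [Ha Hy] _ IH]; simpl in *.
  - apply wcomb_zero.
  - apply wcomb_add; auto. rewrite <- (Rmult_1_r a) at 1. apply wcomb_scal; auto.
Qed.

Lemma conv_conv (A : X -> Prop) (z : X) : conv (conv A) z -> conv A z.
Proof. apply wcomb_conv. Qed.

Lemma conv_ball (A : X -> Prop) (z : X) :
  (forall y, A y -> B_X y) -> conv A z -> B_X z.
Proof.
  intros HA Hz. unfold B_X. rewrite <- (Rmult_1_l 1).
  apply (wcomb_norm A); auto.
Qed.

Lemma wcomb_approx (A B : X -> Prop) (d lam : R) (w : X) :
  (forall y, A y -> exists y', B y' /\ vnorm (vadd y (vscal (-1) y')) <= d) ->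
  wcomb A lam w ->
  exists w', wcomb B lam w' /\ vnorm (vadd w (vscal (-1) w')) <= lam * d.
Proof.
  intros HAB [m [Am [<- ->]]].
  induction Am as [|[a y] m [Ha Hy] _ IH]; simpl in *.
  - exists vzero. split; [apply wcomb_zero|].
    rewrite vscal_zero, vadd_0, vnorm_zero; lra.
  - destruct IH as [w' [Bw' Dw']]. destruct (HAB y Hy) as [y' [By' Dy']].
    exists (vadd (vscal a y') w'). split.
    + apply wcomb_add; auto. apply wcomb_single; auto.
    + rewrite vsub_vadd, vsub_vscal.
      eapply Rle_trans; [apply vnorm_triangle|].
      rewrite vnorm_scal, Rabs_pos_eq by auto.
      pose proof (Rmult_le_compat_l a _ _ Ha Dy'). lra.
Qed.

Lemma wcomb_shift (A : X -> Prop) (x : X) (lam : R) (w : X) :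
  wcomb A lam w ->
  wcomb (fun y => exists y', A y' /\ y = vadd x y') lam (vadd (vscal lam x) w).
Proof.
  intros [m [Am [<- ->]]].
  induction Am as [|[a y] m [Ha Hy] _ IH]; simpl in *.
  - rewrite vscal_0, vadd_0. apply wcomb_zero.
  - rewrite vscal_distr_s, vadd_shuffle, <- vscal_distr_v.
    apply wcomb_add; auto. apply wcomb_single; eauto.
Qed.

End ConvexCombinations.

Section IsometryGroup.
Context {X : NormedSpace}.

Lemma linear_zero (T : X -> X) : is_linear T -> T vzero = vzero.
Proof.
  intros [_ HT]. rewrite <- (vscal_0 vzero) at 1. rewrite HT. apply vscal_0.
Qed.

Lemma linear_sub (T : X -> X) (x y : X) :
  is_linear T -> T (vadd x (vscal (-1) y)) = vadd (T x) (vscal (-1) (T y)).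
Proof. intros [H1 H2]. rewrite H1, H2. reflexivity. Qed.

Lemma GX_comp (T S : X -> X) : in_GX T -> in_GX S -> in_GX (fun z => T (S z)).
Proof.
  intros [[T1 T2] [T3 T4]] [[S1 S2] [S3 S4]]. split; [split|split].
  - intros; rewrite S1, T1; auto.
  - intros; rewrite S2, T2; auto.
  - intros; rewrite T3, S3; auto.
  - intros y. destruct (T4 y) as [w <-]. destruct (S4 w) as [v <-]. exists v; auto.
Qed.

Lemma GX_neg : in_GX (fun z : X => vscal (-1) z).
Proof.
  split; [split|split].
  - intros; apply vscal_distr_v.
  - intros; rewrite !vscal_assoc, Rmult_comm; auto.
  - intros; apply vnorm_opp1.
  - intros y. exists (vscal (-1) y).
    rewrite vscal_assoc. replace (-1 * -1) with 1 by ring. apply vscal_1.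
Qed.

Lemma GX_inj (T : X -> X) : in_GX T -> forall a b, T a = T b -> a = b.
Proof.
  intros [HL [HN _]] a b E.
  assert (D : vadd a (vscal (-1) b) = vzero).
  { apply vnorm_eq0. rewrite <- HN, linear_sub, E, vsub_self by auto.
    apply vnorm_zero. }
  transitivity (vadd (vadd a (vscal (-1) b)) b).
  - rewrite <- vadd_assoc, (vadd_comm _ b), vsub_self, vadd_0; reflexivity.
  - rewrite D; apply vadd_0l.
Qed.

Lemma GX_inv (T : X -> X) :
  in_GX T -> exists S, in_GX S /\ forall z, T (S z) = z.
Proof.
  intros HT. pose proof HT as [[H1 H2] [H3 H4]].
  destruct (choice (fun z w => T w = z) H4) as [S HS].
  exists S; split; auto. split; [split|split].
  - intros x y. apply (GX_inj T HT). rewrite H1, !HS; auto.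
  - intros a x. apply (GX_inj T HT). rewrite H2, !HS; auto.
  - intros x. rewrite <- H3, HS; auto.
  - intros y. exists (T y). apply (GX_inj T HT). rewrite HS; auto.
Qed.

Lemma orbit_self (x : X) : orbit x x.
Proof.
  exists (fun z => z). split; auto. split; [split; auto|split; auto]. eauto.
Qed.

Lemma orbit_GX (x y : X) (T : X -> X) : in_GX T -> orbit x y -> orbit x (T y).
Proof. intros HT [S [HS ->]]. exists (fun z => T (S z)). split; auto. apply GX_comp; auto. Qed.

Lemma orbit_norm (x y : X) : orbit x y -> vnorm y = vnorm x.
Proof. intros [T [[_ [H _]] ->]]; auto. Qed.

Lemma linear_wcomb (A B : X -> Prop) (T : X -> X) (lam : R) (w : X) :
  is_linear T -> (forall y, A y -> B (T y)) -> wcomb A lam w -> wcomb B lam (T w).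
Proof.
  intros HT HAB [m [Am [<- ->]]].
  induction Am as [|[a y] m [Ha Hy] _ IH]; simpl in *.
  - rewrite linear_zero by auto. apply wcomb_zero.
  - destruct HT as [H1 H2]. rewrite H1, H2.
    apply wcomb_add; auto. apply wcomb_single; auto.
Qed.

Lemma conv_orbit_GX (x y : X) (T : X -> X) :
  in_GX T -> conv (orbit x) y -> conv (orbit x) (T y).
Proof.
  intros HT. apply linear_wcomb; [apply HT|]. intros; apply orbit_GX; auto.
Qed.

End IsometryGroup.

Section HahnBanach.
Context {X : NormedSpace}.

(** Sublinear functionals, and linear functionals on subspaces dominated by
    them, represented by their graphs [G : X -> R -> Prop]. *)
Definition sublinear (p : X -> R) : Prop :=
  (forall x y, p (vadd x y) <= p x + p y) /\
  (forall t x, 0 < t -> p (vscal t x) = t * p x).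

Definition linear_graph (G : X -> R -> Prop) : Prop :=
  (forall x a a', G x a -> G x a' -> a = a') /\ G vzero 0 /\
  (forall x y a c, G x a -> G y c -> G (vadd x y) (a + c)) /\
  (forall t x a, G x a -> G (vscal t x) (t * a)).

Definition dominated (p : X -> R) (G : X -> R -> Prop) : Prop :=
  linear_graph G /\ forall x a, G x a -> a <= p x.

Definition subgraph (G H : X -> R -> Prop) : Prop := forall x a, G x a -> H x a.

Definition extend_graph (G : X -> R -> Prop) (x0 : X) (al : R) : X -> R -> Prop :=
  fun z c => exists y a t, G y a /\ z = vadd y (vscal t x0) /\ c = a + t * al.

Lemma extend_graph_sub (G : X -> R -> Prop) (x0 : X) (al : R) :
  subgraph G (extend_graph G x0 al).
Proof.
  intros x a Ga. exists x, a, 0. rewrite vscal_0, vadd_0.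
  split; [auto|split; [reflexivity|ring]].
Qed.

Lemma extend_graph_at (G : X -> R -> Prop) (x0 : X) (al : R) :
  linear_graph G -> extend_graph G x0 al x0 al.
Proof.
  intros [_ [G0 _]]. exists vzero, 0, 1. rewrite vadd_0l, vscal_1.
  split; [auto|split; [reflexivity|ring]].
Qed.

Lemma vsub_of_eq (y1 y2 x : X) (t1 t2 : R) :
  vadd y1 (vscal t1 x) = vadd y2 (vscal t2 x) ->
  vadd y1 (vscal (-1) y2) = vscal (t2 + - t1) x.
Proof.
  intro E.
  assert (Ey1 : y1 = vadd y2 (vscal (t2 + - t1) x)).
  { rewrite vscal_distr_s, vadd_assoc, <- E, <- vadd_assoc, <- vscal_distr_s.
    replace (t1 + - t1) with 0 by ring. rewrite vscal_0, vadd_0; reflexivity. }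
  rewrite Ey1, (vadd_comm y2), <- vadd_assoc, vsub_self, vadd_0. reflexivity.
Qed.

Lemma extend_graph_linear (G : X -> R -> Prop) (x0 : X) (al : R) :
  linear_graph G -> (forall a, ~ G x0 a) -> linear_graph (extend_graph G x0 al).
Proof.
  intros [V1 [V2 [V3 V4]]] Hx0. split; [|split; [|split]].
  - intros z c c' [y1 [a1 [t1 [G1 [-> ->]]]]] [y2 [a2 [t2 [G2 [E ->]]]]].
    apply vsub_of_eq in E.
    destruct (Req_dec t1 t2) as [<-|Nt].
    + replace (t1 + - t1) with 0 in E by ring. rewrite vscal_0 in E.
      assert (Gd := V3 _ _ _ _ G1 (V4 (-1) _ _ G2)). rewrite E in Gd.
      pose proof (V1 _ _ _ Gd V2). lra.
    + exfalso. apply (Hx0 (/ (t2 + - t1) * (a1 + -1 * a2))).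
      assert (Gd := V4 (/ (t2 + - t1)) _ _ (V3 _ _ _ _ G1 (V4 (-1) _ _ G2))).
      rewrite E, vscal_assoc, Rinv_l, vscal_1 in Gd; auto. lra.
  - exists vzero, 0, 0. rewrite vscal_0, vadd_0.
    split; [auto|split; [reflexivity|ring]].
  - intros x y a c [y1 [a1 [t1 [G1 [-> ->]]]]] [y2 [a2 [t2 [G2 [-> ->]]]]].
    exists (vadd y1 y2), (a1 + a2), (t1 + t2). split; [auto|split].
    + rewrite vadd_shuffle, vscal_distr_s; reflexivity.
    + ring.
  - intros s x a [y [a1 [t [Ga [-> ->]]]]].
    exists (vscal s y), (s * a1), (s * t). split; [auto|split].
    + rewrite vscal_distr_v, vscal_assoc; reflexivity.
    + ring.
Qed.

Lemma vscal_factor (s t : R) (y x : X) :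
  s <> 0 -> vadd y (vscal t x) = vscal s (vadd (vscal (/ s) y) (vscal (t / s) x)).
Proof.
  intro Hs. rewrite vscal_distr_v, !vscal_assoc.
  replace (s * / s) with 1 by (field; auto). replace (s * (t / s)) with t by (field; auto).
  rewrite vscal_1; reflexivity.
Qed.

Lemma extend_graph_dominated (p : X -> R) (G : X -> R -> Prop) (x0 : X) (al : R) :
  sublinear p -> dominated p G ->
  (forall y a, G y a -> a - p (vadd y (vscal (-1) x0)) <= al) ->
  (forall y a, G y a -> al <= p (vadd y x0) - a) ->
  forall z c, extend_graph G x0 al z c -> c <= p z.
Proof.
  intros [_ Phom] [[_ [_ [_ V4]]] V5] Lo Hi z c [y [a [t [Ga [-> ->]]]]].
  destruct (Rtotal_order t 0) as [Hneg|[->|Hpos]].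
  - rewrite (vscal_factor (- t)), Phom by lra.
    replace (t / - t) with (-1) by (field; lra).
    pose proof (Lo _ _ (V4 (/ - t) _ _ Ga)) as L.
    set (P := p (vadd (vscal (/ - t) y) (vscal (-1) x0))) in *.
    assert (- t * (/ - t * a) - - t * P <= - t * al)
      by (rewrite <- Rmult_minus_distr_l; apply Rmult_le_compat_l; lra).
    replace (- t * (/ - t * a)) with a in * by (field; lra). lra.
  - rewrite vscal_0, vadd_0. replace (a + 0 * al) with a by ring. auto.
  - rewrite (vscal_factor t), Phom by lra.
    replace (t / t) with 1 by (field; lra). rewrite vscal_1.
    pose proof (Hi _ _ (V4 (/ t) _ _ Ga)) as L.
    set (P := p (vadd (vscal (/ t) y) x0)) in *.
    assert (t * al <= t * P - t * (/ t * a))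
      by (rewrite <- Rmult_minus_distr_l; apply Rmult_le_compat_l; lra).
    replace (t * (/ t * a)) with a in * by (field; lra). lra.
Qed.

(** A value [al] between the two bounds exists: every lower bound is below
    every upper bound, by subadditivity. *)
Lemma extension_value (p : X -> R) (G : X -> R -> Prop) (x0 : X) :
  sublinear p -> dominated p G ->
  exists al, (forall y a, G y a -> a - p (vadd y (vscal (-1) x0)) <= al) /\
             (forall y a, G y a -> al <= p (vadd y x0) - a).
Proof.
  intros [Psub _] [[_ [V2 [V3 _]]] V5].
  set (E := fun r => exists y a, G y a /\ r = a - p (vadd y (vscal (-1) x0))).
  assert (Key : forall y1 a1 y2 a2, G y1 a1 -> G y2 a2 ->
             a1 - p (vadd y1 (vscal (-1) x0)) <= p (vadd y2 x0) - a2).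
  { intros y1 a1 y2 a2 G1 G2.
    pose proof (V5 _ _ (V3 _ _ _ _ G1 G2)) as H.
    pose proof (Psub (vadd y1 (vscal (-1) x0)) (vadd y2 x0)) as H'.
    rewrite vadd_shuffle, (vadd_comm (vscal (-1) x0) x0), vsub_self, vadd_0 in H'. lra. }
  destruct (completeness E) as [al [Hub Hlub]].
  - exists (p (vadd vzero x0) - 0). intros r [y [a [Ga ->]]]. apply Key; auto.
  - exists (0 - p (vadd vzero (vscal (-1) x0))), vzero, 0; auto.
  - exists al. split.
    + intros y a Ga. apply Hub. exists y, a; auto.
    + intros y a Ga. apply Hlub. intros r [y' [a' [Ga' ->]]]. apply Key; auto.
Qed.

Lemma dominated_extension (p : X -> R) (G : X -> R -> Prop) (x0 : X) :
  sublinear p -> dominated p G -> (forall a, ~ G x0 a) ->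
  exists al, dominated p (extend_graph G x0 al).
Proof.
  intros Hp HG Hx0. destruct (extension_value p G x0 Hp HG) as [al [Lo Hi]].
  exists al. split.
  - apply extend_graph_linear; auto. apply HG.
  - apply extend_graph_dominated; auto.
Qed.

Definition graph_union (A : (X -> R -> Prop) -> Prop) : X -> R -> Prop :=
  fun x a => exists G, A G /\ G x a.

Definition graph_chain (A : (X -> R -> Prop) -> Prop) : Prop :=
  forall G H, A G -> A H -> subgraph G H \/ subgraph H G.

(** The union of a nonempty chain of dominated graphs is a dominated graph:
    any two points of the union already lie in a common member. *)
Lemma chain_union_dominated (p : X -> R) (A : (X -> R -> Prop) -> Prop) :
  (exists G, A G) -> (forall G, A G -> dominated p G) -> graph_chain A ->
  dominated p (graph_union A).
Proof.
  intros [G0 AG0] HA HC.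
  assert (Pair : forall x a y c, graph_union A x a -> graph_union A y c ->
                   exists G, A G /\ G x a /\ G y c).
  { intros x a y c [G [AG Gx]] [H [AH Hy]].
    destruct (HC G H AG AH) as [S|S]; [exists H|exists G]; auto. }
  split; [split; [|split; [|split]]|].
  - intros x a a' Ea Ea'. destruct (Pair _ _ _ _ Ea Ea') as [G [AG [Ga Ga']]].
    apply (proj1 (proj1 (HA G AG)) x); auto.
  - exists G0. split; auto. apply (HA G0 AG0).
  - intros x y a c Ex Ey. destruct (Pair _ _ _ _ Ex Ey) as [G [AG [Gx Gy]]].
    exists G. split; auto. apply (HA G AG); auto.
  - intros t x a [G [AG Gx]]. exists G. split; auto. apply (HA G AG); auto.
  - intros x a [G [AG Gx]]. apply (HA G AG); auto.
Qed.

(** The proof applies Zorn's lemma to the dominated extensions of [b]. *)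
Theorem hahn_banach (p : X -> R) (b : X -> R -> Prop) :
  sublinear p -> dominated p b ->
  exists F : X -> R, (forall x y, F (vadd x y) = F x + F y) /\
    (forall a x, F (vscal a x) = a * F x) /\ (forall x, F x <= p x) /\
    (forall x c, b x c -> F x = c).
Proof.
  intros Hp Hb.
  set (Ext := {G : X -> R -> Prop | dominated p G /\ subgraph b G}).
  set (le := fun s t : Ext => boolp.asbool (subgraph (proj1_sig s) (proj1_sig t))).
  assert (leE : forall s t, is_true (le s t) = subgraph (proj1_sig s) (proj1_sig t))
    by (intros; apply boolp.asboolE).
  destruct (classical_sets.ZL_preorder (exist _ b (conj Hb (fun x a H => H)) : Ext)
              (R := le)) as [[M [DM bM]] HM].
  - intros s. rewrite leE. intros x a; auto.
  - intros r s t. rewrite !leE. intros H1 H2 x a Hx; auto.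
  - intros A HA.
    set (C := fun G => G = b \/ exists s, A s /\ proj1_sig s = G).
    assert (DC : dominated p (graph_union C)).
    { apply chain_union_dominated.
      - exists b; left; auto.
      - intros G [->|[s [_ <-]]]; auto. apply (proj2_sig s).
      - intros G H [->|[s [As <-]]] [->|[t [At <-]]].
        + left; intros x a; auto.
        + left; apply (proj2_sig t).
        + right; apply (proj2_sig s).
        + destruct (HA s t As At) as [E|E]; rewrite leE in E; auto. }
    assert (bC : subgraph b (graph_union C)) by (intros x a H; exists b; split; auto; left; auto).
    exists (exist _ (graph_union C) (conj DC bC)). intros s As. rewrite leE.
    intros x a Hx. exists (proj1_sig s). split; auto. right; eauto.
  - assert (Tot : forall x, exists a, M x a).
    { intro x0. apply NNPP; intro Hn.
      assert (Hx0 : forall a, ~ M x0 a) by (intros a Ha; apply Hn; eauto).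
      destruct (dominated_extension p M x0 Hp DM Hx0) as [al Hal].
      assert (bE : subgraph b (extend_graph M x0 al))
        by (intros x a H; apply extend_graph_sub; auto).
      specialize (HM (exist _ (extend_graph M x0 al) (conj Hal bE))).
      cbv beta in HM. rewrite !leE in HM. simpl in HM.
      apply (Hx0 al), HM; [apply extend_graph_sub|apply extend_graph_at, DM]. }
    destruct (choice M Tot) as [F HF].
    pose proof DM as [[V1 [_ [V3 V4]]] V5].
    exists F. split; [|split; [|split]].
    + intros x y. apply (V1 (vadd x y)); auto.
    + intros a x. apply (V1 (vscal a x)); auto.
    + intros x; auto.
    + intros x c Hx. apply (V1 x); auto.
Qed.

End HahnBanach.

Section Separation.
Context {X : NormedSpace}.

Definition is_inf (E : R -> Prop) (m : R) : Prop :=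
  (forall v, E v -> m <= v) /\ (forall w, (forall v, E v -> w <= v) -> w <= m).

(** The infimum of a set of reals, meaningful for nonempty sets bounded below by 0. *)
Definition inf_nonneg (E : R -> Prop) : R := epsilon (inhabits 0) (is_inf E).

Lemma inf_nonneg_spec (E : R -> Prop) :
  (exists v, E v) -> (forall v, E v -> 0 <= v) -> is_inf E (inf_nonneg E).
Proof.
  intros [v0 Hv0] Hpos. unfold inf_nonneg. apply epsilon_spec.
  destruct (completeness (fun r => E (- r))) as [m [M1 M2]].
  - exists 0. intros r Hr. specialize (Hpos _ Hr). lra.
  - exists (- v0). rewrite Ropp_involutive; auto.
  - exists (- m). split.
    + intros v Ev. assert (- v <= m) by (apply M1; rewrite Ropp_involutive; auto). lra.
    + intros w Hw. assert (m <= - w) by (apply M2; intros r Hr; specialize (Hw _ Hr); lra).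
      lra.
Qed.

Section Gauge.
Variable A : X -> Prop.
Hypothesis A_ball : forall y, A y -> vnorm y <= 1.
Variable K : R.
Hypothesis K_pos : 0 < K.

Definition gauge_values (z : X) (v : R) : Prop :=
  exists lam w, wcomb A lam w /\ v = lam + K * vnorm (vadd z (vscal (-1) w)).

(** [gauge z = inf { lam + K ||z - w|| : w a combination of weight lam of A }]:
    the inf-convolution of the Minkowski functional of [conv A] with [K] times
    the norm.  It is sublinear, at most [K] times the norm and at most 1 on [A],
    but large at points far from [conv A]. *)
Definition gauge (z : X) : R := inf_nonneg (gauge_values z).

Lemma gauge_values_nonneg (z : X) (v : R) : gauge_values z v -> 0 <= v.
Proof.
  intros [lam [w [Hw ->]]]. pose proof (wcomb_nonneg _ _ _ Hw).
  pose proof (vnorm_nonneg (vadd z (vscal (-1) w))). nra.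
Qed.

Lemma gauge_is_inf (z : X) : is_inf (gauge_values z) (gauge z).
Proof.
  apply inf_nonneg_spec; [|apply gauge_values_nonneg].
  exists (0 + K * vnorm (vadd z (vscal (-1) vzero))), 0, vzero.
  split; [apply wcomb_zero|reflexivity].
Qed.

Lemma gauge_le (z : X) (lam : R) (w : X) :
  wcomb A lam w -> gauge z <= lam + K * vnorm (vadd z (vscal (-1) w)).
Proof. intro Hw. apply (proj1 (gauge_is_inf z)). exists lam, w; auto. Qed.

Lemma gauge_ge (z : X) (m : R) :
  (forall lam w, wcomb A lam w -> m <= lam + K * vnorm (vadd z (vscal (-1) w))) ->
  m <= gauge z.
Proof. intro H. apply (proj2 (gauge_is_inf z)). intros v [lam [w [Hw ->]]]; auto. Qed.

Lemma gauge_nonneg (z : X) : 0 <= gauge z.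
Proof. apply gauge_ge. intros lam w Hw. apply (gauge_values_nonneg z). exists lam, w; auto. Qed.

Lemma gauge_le_norm (z : X) : gauge z <= K * vnorm z.
Proof.
  pose proof (gauge_le z 0 vzero (wcomb_zero A)) as G.
  rewrite vscal_zero, vadd_0 in G. lra.
Qed.

Lemma gauge_le_one (y : X) : A y -> gauge y <= 1.
Proof.
  intro Hy. pose proof (gauge_le y 1 _ (wcomb_single A 1 y ltac:(lra) Hy)) as G.
  rewrite vscal_1, vsub_self, vnorm_zero in G. lra.
Qed.

Lemma gauge_scal_le (t : R) (z : X) : 0 < t -> gauge (vscal t z) <= t * gauge z.
Proof.
  intro Ht.
  assert (H : / t * gauge (vscal t z) <= gauge z).
  { apply gauge_ge. intros lam w Hw.
    pose proof (gauge_le (vscal t z) _ _ (wcomb_scal A t lam w (Rlt_le _ _ Ht) Hw)) as G.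
    rewrite vsub_vscal, vnorm_scal, Rabs_pos_eq in G by lra.
    apply (Rmult_le_reg_l t); auto. rewrite <- Rmult_assoc, Rinv_r, Rmult_1_l by lra.
    eapply Rle_trans; [exact G|right; ring]. }
  apply (Rmult_le_compat_l t) in H; [|lra].
  rewrite <- Rmult_assoc, Rinv_r, Rmult_1_l in H by lra. exact H.
Qed.

Lemma gauge_sublinear : sublinear gauge.
Proof.
  split.
  - intros z1 z2.
    assert (gauge (vadd z1 z2) - gauge z1 <= gauge z2); [|lra].
    apply gauge_ge. intros l2 w2 H2.
    assert (gauge (vadd z1 z2) - (l2 + K * vnorm (vadd z2 (vscal (-1) w2))) <= gauge z1);
      [|lra].
    apply gauge_ge. intros l1 w1 H1.
    pose proof (gauge_le (vadd z1 z2) _ _ (wcomb_add A _ _ _ _ H1 H2)) as G.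
    rewrite vsub_vadd in G.
    pose proof (Rmult_le_compat_l K _ _ (Rlt_le _ _ K_pos)
                  (vnorm_triangle (vadd z1 (vscal (-1) w1)) (vadd z2 (vscal (-1) w2)))).
    lra.
  - intros t z Ht. apply Rle_antisym; [apply gauge_scal_le; auto|].
    pose proof (gauge_scal_le (/ t) (vscal t z) (Rinv_0_lt_compat _ Ht)) as H.
    rewrite vscal_assoc, Rinv_l, vscal_1 in H by lra.
    apply (Rmult_le_compat_l t) in H; [|lra].
    rewrite <- Rmult_assoc, Rinv_r, Rmult_1_l in H by lra. exact H.
Qed.

(** A combination of weight at most 1 of a symmetric pair in [A] can be padded
    into a convex combination. *)
Lemma wcomb_pad (y0 : X) (lam : R) (w : X) :
  A y0 -> A (vscal (-1) y0) -> lam <= 1 -> wcomb A lam w -> conv A w.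
Proof.
  intros Hy0 Hy0' Hlam Hw. set (h := (1 - lam) / 2).
  assert (Hh : 0 <= h) by (unfold h; lra).
  assert (Pad : wcomb A (h + h) vzero).
  { replace vzero with (vadd (vscal h y0) (vscal h (vscal (-1) y0))).
    - apply wcomb_add; apply wcomb_single; auto.
    - rewrite vscal_assoc, <- vscal_distr_s. replace (h + h * -1) with 0 by ring.
      apply vscal_0. }
  apply conv_wcomb. replace 1 with (lam + (h + h)) by (unfold h; field).
  rewrite <- (vadd_0 w). apply wcomb_add; auto.
Qed.

Lemma wcomb_normalize (lam : R) (w : X) :
  0 < lam -> wcomb A lam w -> conv A (vscal (/ lam) w).
Proof.
  intros Hlam Hw. apply conv_wcomb. replace 1 with (/ lam * lam) by (field; lra).
  apply wcomb_scal; auto. left; apply Rinv_0_lt_compat; auto.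
Qed.

Lemma gauge_far (y0 u : X) (e : R) :
  A y0 -> A (vscal (-1) y0) -> 0 < e <= 1 -> K * e = 2 ->
  (forall y, conv A y -> e <= vnorm (vadd u (vscal (-1) y))) ->
  1 + e / 2 <= gauge u.
Proof.
  intros Hy0 Hy0' He HKe Hsep. apply gauge_ge. intros lam w Hw.
  set (d := vnorm (vadd u (vscal (-1) w))).
  assert (Hd : 0 <= K * d) by (apply Rmult_le_pos; [lra|apply vnorm_nonneg]).
  destruct (Rle_lt_dec (1 + e / 2) lam) as [H1|H1]; [lra|].
  destruct (Rle_lt_dec lam 1) as [H2|H2].
  - pose proof (Hsep w (wcomb_pad y0 lam w Hy0 Hy0' H2 Hw)). fold d in H.
    pose proof (Rmult_le_compat_l K _ _ (Rlt_le _ _ K_pos) H).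
    pose proof (wcomb_nonneg _ _ _ Hw). lra.
  - pose proof (Hsep _ (wcomb_normalize lam w ltac:(lra) Hw)) as Hs.
    pose proof (vdist_tri u w (vscal (/ lam) w)) as Ht.
    assert (Hil : / lam < 1).
    { rewrite <- Rinv_1. apply Rinv_lt_contravar; lra. }
    assert (Ew : vnorm (vadd w (vscal (-1) (vscal (/ lam) w))) = (1 - / lam) * vnorm w).
    { rewrite vscal_assoc, <- (vscal_1 w) at 1. rewrite <- vscal_distr_s, vnorm_scal.
      rewrite Rabs_pos_eq by lra. f_equal; ring. }
    pose proof (wcomb_norm A 1 lam w A_ball Hw) as Nw.
    assert ((1 - / lam) * vnorm w <= (1 - / lam) * lam)
      by (apply Rmult_le_compat_l; lra).
    assert ((1 - / lam) * lam = lam - 1) by (field; lra).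
    assert (e / 2 <= d) by (fold d in Ht; lra).
    pose proof (Rmult_le_compat_l K _ _ (Rlt_le _ _ K_pos) H3). lra.
Qed.

End Gauge.

Lemma line_graph_dominated (p : X -> R) (u : X) :
  sublinear p -> (forall z, 0 <= p z) -> u <> vzero ->
  dominated p (fun z c => exists t, z = vscal t u /\ c = t * p u).
Proof.
  intros [_ Phom] Hpos Hu. split; [split; [|split; [|split]]|].
  - intros z c c' [t1 [-> ->]] [t2 [E ->]].
    assert (D : vnorm (vadd (vscal t1 u) (vscal (-1) (vscal t2 u))) = 0)
      by (rewrite E, vsub_self; apply vnorm_zero).
    rewrite vscal_assoc, <- vscal_distr_s, vnorm_scal in D.
    assert (Nu : vnorm u <> 0) by (intro N; apply Hu, vnorm_eq0, N).
    destruct (Rmult_integral _ _ D) as [Z|Z]; [|contradiction].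
    replace t2 with t1; [reflexivity|].
    destruct (Req_dec (t1 + -1 * t2) 0) as [Z'|Z']; [lra|].
    apply Rabs_no_R0 in Z'; contradiction.
  - exists 0. rewrite vscal_0. split; [reflexivity|ring].
  - intros z y a c [t1 [-> ->]] [t2 [-> ->]]. exists (t1 + t2).
    rewrite vscal_distr_s. split; [reflexivity|ring].
  - intros s z a [t [-> ->]]. exists (s * t). rewrite vscal_assoc. split; [reflexivity|ring].
  - intros z a [t [-> ->]]. destruct (Rtotal_order t 0) as [H|[->|H]].
    + pose proof (Hpos (vscal t u)). pose proof (Hpos u). nra.
    + pose proof (Hpos (vscal 0 u)). lra.
    + rewrite Phom by auto. lra.
Qed.

Lemma dual_of_bounded (F : X -> R) (K : R) :
  (forall x y, F (vadd x y) = F x + F y) -> (forall a x, F (vscal a x) = a * F x) ->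
  (forall x, F x <= K * vnorm x) -> is_dual_elt F.
Proof.
  intros F1 F2 FK. split; [|split]; auto. exists K. intro z. apply Rabs_le. split.
  - pose proof (FK (vscal (-1) z)) as H. rewrite F2, vnorm_opp1 in H. lra.
  - apply FK.
Qed.

Theorem separation (A : X -> Prop) (y0 u : X) :
  (forall y, A y -> vnorm y <= 1) -> A y0 -> A (vscal (-1) y0) ->
  ~ closure (conv A) u ->
  exists F, is_dual_elt F /\ 1 < F u /\ forall y, A y -> F y <= 1.
Proof.
  intros HA Hy0 Hy0' Hn.
  assert (Hfar : exists eps, eps > 0 /\
            forall y, conv A y -> eps <= vnorm (vadd u (vscal (-1) y))).
  { apply NNPP; intro H. apply Hn. intros eps Heps. apply NNPP; intro H2. apply H.
    exists eps; split; auto. intros y Hy. apply Rnot_lt_le. intro Hl. apply H2.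
    exists y; split; auto. rewrite vsub_scal; auto. }
  destruct Hfar as [eps [Heps Hsep]].
  set (e := Rmin eps 1).
  assert (He : 0 < e <= 1) by (unfold e; split; [apply Rmin_glb_lt|apply Rmin_r]; lra).
  assert (Hsep' : forall y, conv A y -> e <= vnorm (vadd u (vscal (-1) y)))
    by (intros y Hy; eapply Rle_trans; [apply Rmin_l|apply Hsep; auto]).
  set (K := 2 / e). assert (HK : 0 < K) by (unfold K; apply Rdiv_lt_0_compat; lra).
  set (p := gauge A K).
  assert (Hpu : 1 < p u).
  { pose proof (gauge_far A HA K HK y0 u e Hy0 Hy0' He ltac:(unfold K; field; lra) Hsep').
    fold p in H. lra. }
  assert (Hu : u <> vzero).
  { intros ->. pose proof (gauge_le_norm A K HK vzero). rewrite vnorm_zero in H. fold p in H. lra. }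
  destruct (hahn_banach p _ (gauge_sublinear A K HK)
              (line_graph_dominated p u (gauge_sublinear A K HK) (gauge_nonneg A K HK) Hu))
    as [F [F1 [F2 [F3 F4]]]].
  exists F. split; [|split].
  - apply (dual_of_bounded F K); auto. intro z. eapply Rle_trans; [apply F3|apply gauge_le_norm; auto].
  - rewrite (F4 u (p u)); auto. exists 1. rewrite vscal_1. split; [reflexivity|ring].
  - intros y Hy. eapply Rle_trans; [apply F3|apply gauge_le_one; auto].
Qed.

End Separation.

Section BigPoints.
Context {X : NormedSpace}.

Lemma closed_conv_orbit_ball (x z : X) : S_X x -> closed_conv (orbit x) z -> B_X z.
Proof.
  intros Hx Hz. unfold B_X. apply Rnot_lt_le; intro H.
  destruct (Hz (vnorm z - 1) ltac:(lra)) as [y [Hy Hd]].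
  assert (By : B_X y).
  { apply (conv_ball (orbit x)); auto. intros w Hw. unfold B_X.
    rewrite (orbit_norm _ _ Hw). unfold S_X in Hx; lra. }
  unfold B_X in By. rewrite vsub_scal in Hd. pose proof (vnorm_rev z y). lra.
Qed.

(** A big point [u] is norming for the sphere: for [x] in [S_X],
    [sup_T ||x + T u|| = 2].  Otherwise [x + y] would have norm at most
    [2 - eps] for every [y] in the convex hull of the orbit of [u], in
    particular for [y] close to [x]. *)
Lemma big_point_norming (x u : X) : S_X x -> big_point u ->
  forall eps, 0 < eps -> exists T, in_GX T /\ 2 - eps < vnorm (vadd x (T u)).
Proof.
  intros Hx [Hu Hb] eps Heps.
  assert (Bx : B_X x) by (unfold B_X, S_X in *; lra).
  destruct (proj2 (Hb x) Bx eps Heps) as [y [Hy Hd]].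
  apply NNPP; intro Hn.
  assert (Hall : forall T, in_GX T -> vnorm (vadd x (T u)) <= 2 - eps).
  { intros T HT. apply Rnot_lt_le; intro H. apply Hn; exists T; split; auto. }
  assert (Hxy : vnorm (vadd x y) <= 2 - eps).
  { pose proof (wcomb_shift (orbit u) x 1 y Hy) as Hs. rewrite vscal_1 in Hs.
    rewrite <- (Rmult_1_l (2 - eps)).
    refine (wcomb_norm _ (2 - eps) 1 _ _ Hs).
    intros z [y' [[T [HT ->]] ->]]. auto. }
  assert (E : vadd (vadd x y) (vadd x (vscal (-1) y)) = vscal 2 x).
  { rewrite vadd_shuffle, vsub_self, vadd_0.
    replace 2 with (1 + 1) by ring. rewrite vscal_distr_s, vscal_1; reflexivity. }
  pose proof (vnorm_triangle (vadd x y) (vadd x (vscal (-1) y))) as Ht.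
  rewrite E, vnorm_scal, Hx, Rabs_pos_eq in Ht by lra.
  rewrite vsub_scal in Hd. lra.
Qed.

Lemma cv_from_below (a : nat -> R) (l : R) :
  (forall n, l - / (INR n + 1) < a n <= l) -> Un_cv a l.
Proof.
  intros Ha eps Heps. destruct (archimed_cor1 eps Heps) as [N [HN1 HN2]].
  exists N. intros n Hn. unfold R_dist. destruct (Ha n) as [A1 A2].
  assert (/ (INR n + 1) <= / INR N).
  { apply Rinv_le_contravar; [apply lt_0_INR; auto|]. apply le_INR in Hn. lra. }
  rewrite Rabs_left1 by lra. lra.
Qed.

(** In an omega-LUR space, [u] is a weak limit of points of the orbit of any
    [x] in the sphere: if [||x + T_n u|| -> 2] then [||u + T_n^-1 x|| -> 2]. *)
Lemma orbit_weak_approx (x u : X) : omega_LUR X -> S_X x -> big_point u ->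
  exists S : nat -> X -> X, (forall n, in_GX (S n)) /\ weak_cv (fun n => S n x) u.
Proof.
  intros Hw Hx Hbig.
  assert (Hpos : forall n, 0 < / (INR n + 1))
    by (intro n; apply Rinv_0_lt_compat; pose proof (pos_INR n); lra).
  destruct (choice (fun n T => in_GX T /\ 2 - / (INR n + 1) < vnorm (vadd x (T u)))
              (fun n => big_point_norming x u Hx Hbig _ (Hpos n))) as [T HT].
  destruct (choice (fun n S => in_GX S /\ forall z, T n (S z) = z)
              (fun n => GX_inv (T n) (proj1 (HT n)))) as [S HS].
  exists S. split; [intro n; apply HS|].
  apply Hw; [apply (proj1 Hbig)| |].
  - intro n. unfold B_X. destruct (HS n) as [[_ [N _]] _]. rewrite N. unfold S_X in Hx; lra.
  - apply cv_from_below. intro n.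
    destruct (HT n) as [[[L _] [N _]] Hn].
    assert (E : vnorm (vadd u (S n x)) = vnorm (vadd x (T n u)))
      by (rewrite <- N, L, (proj2 (HS n)), vadd_comm; reflexivity).
    rewrite E. split; auto.
    eapply Rle_trans; [apply vnorm_triangle|]. rewrite N.
    pose proof (proj1 Hbig). unfold S_X in *; lra.
Qed.

(** Hence [u] lies in the norm-closed convex hull of the orbit of [x]: a
    functional separating [u] from that hull would contradict weak convergence. *)
Lemma big_point_in_hull (x u : X) : omega_LUR X -> S_X x -> big_point u ->
  closure (conv (orbit x)) u.
Proof.
  intros Hw Hx Hbig. apply NNPP; intro Hn.
  destruct (separation (orbit x) x u) as [F [HF [Fu Fy]]]; auto.
  - intros y Hy. rewrite (orbit_norm _ _ Hy). unfold S_X in Hx; lra.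
  - apply orbit_self.
  - apply (orbit_GX x x _ GX_neg), orbit_self.
  - destruct (orbit_weak_approx x u Hw Hx Hbig) as [S [HS Hwc]].
    destruct (Hwc F HF (F u - 1) ltac:(lra)) as [N HN].
    specialize (HN N (le_n N)). unfold R_dist in HN.
    assert (F (S N x) <= 1) by (apply Fy; exists (S N); split; auto).
    rewrite Rabs_left1 in HN by lra. lra.
Qed.

(** If [u] is in the closed convex hull of the orbit of [x], then so is the
    closed convex hull of the orbit of [u], since that hull is [G_X]-invariant. *)
Lemma closed_conv_orbit_mono (x u z : X) :
  closure (conv (orbit x)) u -> closed_conv (orbit u) z -> closed_conv (orbit x) z.
Proof.
  intros Hux Hz eps Heps.
  destruct (Hz (eps / 2) ltac:(lra)) as [w [Hw Dw]].
  destruct (Hux (eps / 2) ltac:(lra)) as [v [Hv Dv]].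
  rewrite vsub_scal in Dw, Dv.
  destruct (wcomb_approx (orbit u) (conv (orbit x)) (vnorm (vadd u (vscal (-1) v))) 1 w)
    as [w' [Hw' Dw']]; auto.
  { intros y [T [HT ->]]. exists (T v). split; [apply conv_orbit_GX; auto|].
    rewrite <- linear_sub by apply HT. destruct HT as [_ [N _]]. rewrite N; lra. }
  exists w'. split; [apply conv_conv; auto|].
  rewrite vsub_scal. pose proof (vdist_tri z w w'). lra.
Qed.

End BigPoints.

(** Proposition 3.4: an omega-LUR space with a big point is convex-transitive. *)
Theorem proposition3p4 (X : NormedSpace) (HX : complete X) (Hw : omega_LUR X)
  (u : X) (Hu : S_X u) (Hbig : big_point u) :
  convex_transitive X.
Proof.
  intros x Hx. split; auto. intro z. split.
  - apply closed_conv_orbit_ball; auto.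
  - intro Bz. apply (closed_conv_orbit_mono x u).
    + apply big_point_in_hull; auto.
    + apply Hbig; auto.
Qed.
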